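(* Let $k$ be a finite field of odd characteristic, let $A(t)\in k[t]$ be a square-free polynomial of odd degree $d>1$, and suppose that its derivative satisfies $A'(t)\equiv \gamma$ for some constant $\gamma\in k^*$. Let $E:y^2=f(x)$ be an elliptic curve defined over $k$, with $f(x)\in k[x]$ cubic, and let $E_A$ be the elliptic curve over $k(t)$ defined by $A(t)y^2=f(x)$. Suppose $(F,G)$ is an integral point of $E_A$ (i.e. $F,G\in k[t]$ with $A(t)G(t)^2=f(F(t))$) satisfying $F'\neq 0$. Then the following three conditions are equivalent: (A) $2 \deg F \leq d-1$; (B) $2 \deg G \leq \deg F-1$; (C) $G^2=\beta F'$ for some $\beta\in k^*$. Furthermore, if one of these conditions holds, then $j(E)=1728$.
   Context: $F'$ denotes the derivative of $F$ with respect to $t$; $j(E)$ is the $j$-invariant of $E$. *)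

From HB Require Import structures.
From mathcomp Require Import all_boot all_order all_algebra all_field.
Set Implicit Arguments. Unset Strict Implicit. Unset Printing Implicit Defensive.
Import GRing.Theory.
Local Open Scope ring_scope.

Definition squarefree_poly (R : fieldType) (p : {poly R}) : Prop :=
  forall g : {poly R}, g * g %| p -> (size g <= 1)%N.

(* The curve y^2 = f(x), f = a x^3 + b x^2 + c x + e (a <> 0), is isomorphic
   (via (x,y) |-> (a x, a y)) to the Weierstrass model
   Y^2 = X^3 + a2 X^2 + a4 X + a6 with a2 = b, a4 = a c, a6 = a^2 e. *)
Section Weierstrass.
Variable (R : fieldType) (f : {poly R}).
Definition wa2 := f`_2.
Definition wa4 := f`_3 * f`_1.
Definition wa6 := f`_3 ^+ 2 * f`_0.
Definition wb2 := 4 * wa2.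
Definition wb4 := 2 * wa4.
Definition wb6 := 4 * wa6.
Definition wb8 := 4 * wa2 * wa6 - wa4 ^+ 2.
Definition wc4 := wb2 ^+ 2 - 24 * wb4.
Definition wdisc := - wb2 ^+ 2 * wb8 - 8 * wb4 ^+ 3 - 27 * wb6 ^+ 2
                    + 9 * wb2 * wb4 * wb6.
Definition j_inv := wc4 ^+ 3 / wdisc.
End Weierstrass.

Definition is_elliptic_cubic (R : fieldType) (f : {poly R}) : Prop :=
  size f = 4%N /\ wdisc f != 0.

From HB Require Import structures.
From mathcomp Require Import all_boot all_order all_algebra all_field.
From mathcomp Require Import ring zify.
Import GRing.Theory.
Local Open Scope ring_scope.
Set Implicit Arguments. Unset Strict Implicit.

(* Differentiating A G^2 = f(F) gives gamma G^2 + 2 A G G' = f'(F) F'.  As f and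
   f' are coprime, G divides F' = G H, and gamma G + 2 A G' = f'(F) H.  Over a
   splitting field f = a (x - e1)(x - e2)(x - e3), and theta_e := gamma G - f'(e) H
   is congruent to -2 A G' modulo F - e.  Since A divides the product of the F - e,
   it divides the product of the nonzero theta_e times the F - e for the vanishing
   ones.  Comparing degrees with deg A + 2 deg G = 3 deg F shows that under (B)
   theta_e vanishes for two roots e.  One of them gives gamma G^2 = f'(e) F', that
   is (C); two of them give f'(e_i) = f'(e_j), which forces c6 = 0, that is
   j = 1728.  (A) <-> (B) is the degree identity, and (C) -> (B) follows from
   deg F' < deg F. *)

Lemma size_gt1_deriv_neq0 (R : fieldType) (p : {poly R}) : p^`() != 0 -> (1 < size p)%N.
Proof. by rewrite ltnNge; apply: contra => /size1_polyC ->; rewrite derivC. Qed.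

Lemma dvdp_deriv_sqr (R : fieldType) (p q : {poly R}) : q ^+ 2 %| p -> q %| p^`().
Proof.
case/dvdpP=> r ->; rewrite derivM deriv_exp expr1 exprS mulrA -mulrnAl -!mulrA mulrCA.
by rewrite dvdp_add ?dvdp_mulIl // mulrA dvdp_mulIr.
Qed.

Lemma dvdp_comp_sub_horner (R : fieldType) (p q : {poly R}) (x : R) :
  q - x%:P %| (p \Po q) - (p.[x])%:P.
Proof.
have : 'X - x%:P %| p - (p.[x])%:P by rewrite dvdp_XsubCl /root !hornerE subrr.
by move/(dvdp_comp_poly q); rewrite !comp_polyB comp_polyX !comp_polyC.
Qed.

Lemma dvdp_prod (R : fieldType) (I : Type) (s : seq I) (x y : I -> {poly R}) :
  (forall i, x i %| y i) -> \prod_(i <- s) x i %| \prod_(i <- s) y i.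
Proof. by move=> dvd_xy; apply: (big_ind2 (@dvdp R)) => // *; apply: dvdp_mul. Qed.

Lemma dvdp_prod_sub (R : fieldType) (I : Type) (s : seq I) (d : {poly R})
    (x y : I -> {poly R}) :
  (forall i, d %| x i - y i) -> d %| \prod_(i <- s) x i - \prod_(i <- s) y i.
Proof.
move=> dvd_xy; apply: (big_ind2 (fun u v => d %| u - v)) => [|x1 y1 x2 y2 d1 d2 | i _].
- by rewrite subrr dvdp0.
- have -> : x1 * x2 - y1 * y2 = (x1 - y1) * x2 + y1 * (x2 - y2) by ring.
  by apply: dvdp_add; [exact: dvdp_mulr | exact: dvdp_mull].
- exact: dvd_xy.
Qed.

Lemma predn_size_prod_seq (R : fieldType) (I : eqType) (s : seq I) (x : I -> {poly R}) :
  (forall i, x i != 0) -> (size (\prod_(i <- s) x i)).-1 = \sum_(i <- s) (size (x i)).-1.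
Proof.
move=> x_neq0; elim: s => [|i s IH]; first by rewrite !big_nil size_poly1.
have P_neq0 : \prod_(j <- s) x j != 0.
  by rewrite prodf_seq_neq0; apply/allP => j _; rewrite x_neq0.
rewrite !big_cons size_mul ?x_neq0 // -IH.
move: (x_neq0 i) P_neq0; rewrite -!size_poly_gt0.
by case: (size (x i)) (size (\prod_(j <- s) x j)) => [|m] [|n] //= _ _; rewrite addnS.
Qed.

Lemma sum_nat_if_count (I : Type) (s : seq I) (P : pred I) (m n : nat) :
  (\sum_(i <- s) (if P i then m else n) = count P s * m + count (predC P) s * n)%N.
Proof. by elim: s => [|i s IH]; rewrite ?big_nil ?big_cons //= IH; case: (P i) => /=; lia. Qed.

Lemma eqp_polyCP (R : fieldType) (p q : {poly R}) :
  reflect (exists c, c != 0 /\ p = c%:P * q) (p %= q).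
Proof.
apply: (iffP (eqpP p q)) => [[[c1 c2] /= /andP[c1_neq0 c2_neq0] c12] | [c [c_neq0 ->]]].
  exists (c2 / c1); split; first by rewrite mulf_neq0 ?invr_eq0.
  by rewrite mul_polyC [c2 / c1]mulrC -scalerA -c12 scalerA mulVf ?scale1r.
by exists (1, c); rewrite /= ?oner_neq0 ?c_neq0 // scale1r mul_polyC.
Qed.

Lemma size_integral_point (R : fieldType) (A f F G : {poly R}) :
    A * G ^+ 2 = f \Po F -> f != 0 -> (1 < size F)%N ->
  ((size A).-1 + 2 * (size G).-1 = (size f).-1 * (size F).-1)%N.
Proof.
move=> AG2_f f_neq0 F_size_gt1; have : A * G ^+ 2 != 0 by rewrite AG2_f comp_poly_eq0.
rewrite -size_comp_poly -AG2_f mulf_eq0 negb_or expf_eq0 /= => /andP[A_neq0 G_neq0].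
rewrite size_mul ?expf_neq0 //; have := size_exp G 2.
move: A_neq0 (expf_neq0 2 G_neq0); rewrite -!size_poly_gt0.
by move: (size A) (size G) (size (G ^+ 2)) => sA sG sG2; lia.
Qed.

Section SplitIntegralPoint.

Variables (L : fieldType) (a gamma : L) (rs : seq L) (A f F G : {poly L}).
Hypotheses (a_neq0 : a != 0) (rs_uniq : uniq rs).
Hypothesis f_split : f = a *: \prod_(e <- rs) ('X - e%:P).
Hypotheses (dA : A^`() = gamma%:P) (AG2_f : A * G ^+ 2 = f \Po F) (dF_neq0 : F^`() != 0).

Lemma coprimep_split_deriv : coprimep f f^`().
Proof.
have := separable_prod_XsubC rs.
by rewrite rs_uniq -(eqp_separable (eqp_scale _ a_neq0)) -f_split unlock.
Qed.

Let F_size_gt1 := size_gt1_deriv_neq0 dF_neq0.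

Lemma split_neq0 : f != 0.
Proof. by rewrite f_split scale_poly_eq0 negb_or a_neq0 monic_neq0 ?monic_prod_XsubC. Qed.

Lemma split_integral_point_neq0 : A != 0 /\ G != 0.
Proof.
have : A * G ^+ 2 != 0 by rewrite AG2_f comp_poly_eq0 ?split_neq0.
by rewrite mulf_eq0 negb_or expf_eq0 /= => /andP[].
Qed.

Let G_neq0 := proj2 split_integral_point_neq0.

Lemma dvdp_integral_point_deriv : G %| F^`().
Proof.
have coprime_G : coprimep G (f^`() \Po F).
  apply: (coprimep_dvdr (p := f \Po F)); first by rewrite -AG2_f expr2 mulrA dvdp_mulIr.
  exact/coprimep_comp_poly/coprimep_split_deriv.
by rewrite -(Gauss_dvdpr _ coprime_G) -deriv_comp -AG2_f dvdp_deriv_sqr // dvdp_mulIr.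
Qed.

Let H := F^`() %/ G.

Let dF_GH : F^`() = G * H.
Proof. by rewrite divpKC // dvdp_integral_point_deriv. Qed.

Let H_neq0 : H != 0.
Proof. by apply: contraNneq dF_neq0; rewrite dF_GH => ->; rewrite mulr0. Qed.

Lemma deriv_integral_point : gamma%:P * G + 2%:R * A * G^`() = (f^`() \Po F) * H.
Proof.
apply: (mulfI G_neq0); rewrite mulrCA -dF_GH -deriv_comp -AG2_f derivM dA deriv_exp.
by rewrite expr1 -mulr_natl; ring.
Qed.

Let theta e := gamma%:P * G - (f^`().[e])%:P * H.

Lemma theta_congr e : A %| theta e - ((f^`() \Po F) - (f^`().[e])%:P) * H.
Proof.
have -> : theta e - ((f^`() \Po F) - (f^`().[e])%:P) * H = - (2%:R * G^`()) * A.
  by rewrite /theta mulrBl -deriv_integral_point; ring.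
exact: dvdp_mull.
Qed.

Lemma dvdp_prod_comp_split : A %| \prod_(e <- rs) (F - e%:P).
Proof.
have : f \Po F = a *: \prod_(e <- rs) (F - e%:P).
  rewrite f_split comp_polyZ rmorph_prod /=.
  by under eq_bigr do rewrite comp_polyB comp_polyX comp_polyC.
by rewrite -AG2_f => /(congr1 (dvdp A)); rewrite dvdp_mulIl dvdpZr.
Qed.

(* The vanishing [theta e] are replaced by [F - e], so that [A] still divides the
   product of the factors. *)
Let X e := if theta e == 0 then F - e%:P else theta e.

Lemma theta_factor_neq0 e : X e != 0.
Proof.
rewrite /X; case: ifP => [_ | /negbT //]; rewrite subr_eq0.
by apply: contraTneq F_size_gt1 => ->; rewrite size_polyC; case: (e != 0).
Qed.

Lemma dvdp_prod_theta_factor : A %| \prod_(e <- rs) X e.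
Proof.
pose Y e := if theta e == 0 then F - e%:P else ((f^`() \Po F) - (f^`().[e])%:P) * H.
have A_dvd_Y : A %| \prod_(e <- rs) Y e.
  apply: (dvdp_trans dvdp_prod_comp_split); apply: dvdp_prod => e; rewrite /Y.
  by case: ifP => _; rewrite ?dvdpp ?dvdp_mulr ?dvdp_comp_sub_horner.
rewrite -(dvdp_subl _ A_dvd_Y) dvdp_prod_sub // => e; rewrite /X /Y.
by case: ifP => _; rewrite ?subrr ?dvdp0 ?theta_congr.
Qed.

Lemma predn_size_theta_factor e : ((size (X e)).-1 <=
  if theta e == 0%R then (size F).-1 else maxn (size G).-1 (size H).-1)%N.
Proof.
rewrite /X; case: ifP => _.
  by rewrite size_polyDl // size_polyN size_polyC; case: (e != 0); rewrite // ltnW.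
rewrite /theta !mul_polyC; have := size_polyD (gamma *: G) (- (f^`().[e] *: H)).
rewrite size_polyN; have := size_scale_leq gamma G; have := size_scale_leq (f^`().[e]) H.
set s := size (_ *: G - _); move: s (size (_ *: G)) (size (_ *: H)) (size G) (size H).
by move=> s sG' sH' sG sH; lia.
Qed.

Lemma count_theta_le1 :
  (2 * (size G).-1 <= (size F).-1 - 1)%N -> (count (fun e => theta e != 0%R) rs <= 1)%N.
Proof.
move=> small_G.
have deg_A : ((size A).-1 <= count (fun e => theta e == 0%R) rs * (size F).-1
                + count (fun e => theta e != 0%R) rs * maxn (size G).-1 (size H).-1)%N.
  rewrite -sum_nat_if_count.
  rewrite (leq_trans _ (leq_sum rs (fun e _ => predn_size_theta_factor e))) //.
  rewrite -(predn_size_prod_seq rs theta_factor_neq0) -!subn1 leq_sub2r //.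
  rewrite dvdp_leq ?dvdp_prod_theta_factor // prodf_seq_neq0.
  by apply/allP => e _; rewrite theta_factor_neq0.
have := size_integral_point AG2_f split_neq0 F_size_gt1.
have -> : size f = (size rs).+1 by rewrite f_split size_scale // size_prod_XsubC.
have := lt_size_deriv (p := F); rewrite -size_poly_gt0 ltnW // dF_GH size_mul // => /(_ isT).
have := count_predC (fun e => theta e == 0%R) rs.
move: G_neq0 H_neq0 small_G deg_A; rewrite -!size_poly_gt0.
move: (count _ rs) (count _ rs) (size A) (size G) (size H) (size F).
move=> nonzero zero sA [|g] [|h] // sF _ _; rewrite !subn1 /= => small_g deg_A <- deg_F deg_AG.
(* This is where (B) enters: it bounds the degree of every nonzero [theta e] by
   [deg F - 1 - deg G]. *)
have max_le : (maxn g h <= sF.-2 - g)%N by lia.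
by have := leq_mul (leqnn nonzero) max_le; nia.
Qed.

Lemma count_deriv_mismatch_le1 : (2 * (size G).-1 <= (size F).-1 - 1)%N ->
  (count (fun e => gamma *: G ^+ 2 != f^`().[e] *: F^`()) rs <= 1)%N.
Proof.
move/count_theta_le1.
rewrite (@eq_count _ _ (fun e => gamma *: G ^+ 2 != f^`().[e] *: F^`())) // => e /=.
rewrite -[in RHS]subr_eq0 (_ : _ - _ = G * theta e) ?mulf_eq0 ?(negbTE G_neq0) //.
by rewrite dF_GH /theta -!mul_polyC; ring.
Qed.

End SplitIntegralPoint.

Definition wc6 (R : fieldType) (f : {poly R}) : R :=
  - wb2 f ^+ 3 + 36 * wb2 f * wb4 f - 216 * wb6 f.

Lemma wc4_wc6_wdisc (R : fieldType) (f : {poly R}) :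
  wc4 f ^+ 3 - wc6 f ^+ 2 = 1728 * wdisc f.
Proof. rewrite /wc4 /wc6 /wdisc /wb2 /wb4 /wb6 /wb8; ring. Qed.

Lemma j_inv_1728 (R : fieldType) (f : {poly R}) :
  wdisc f != 0 -> wc6 f = 0 -> j_inv f = 1728.
Proof.
move=> disc_neq0 c6_eq0.
by rewrite /j_inv -[wc4 f ^+ 3]subr0 -[0](expr0n _ 2) -c6_eq0 wc4_wc6_wdisc mulfK.
Qed.

Section WeierstrassMap.

Variables (K L : fieldType) (phi : {rmorphism K -> L}) (f : {poly K}).

Lemma wdisc_map : wdisc (map_poly phi f) = phi (wdisc f).
Proof.
rewrite /wdisc /wb2 /wb4 /wb6 /wb8 /wa2 /wa4 /wa6 !coef_map /=.
by rewrite !(rmorph_nat, rmorphB, rmorphD, rmorphM, rmorphN, rmorphXn).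
Qed.

Lemma wc6_map : wc6 (map_poly phi f) = phi (wc6 f).
Proof.
rewrite /wc6 /wb2 /wb4 /wb6 /wa2 /wa4 /wa6 !coef_map /=.
by rewrite !(rmorph_nat, rmorphB, rmorphD, rmorphM, rmorphN, rmorphXn).
Qed.

End WeierstrassMap.

Section SplitCubic.

Variables (R : fieldType) (a e1 e2 e3 : R) (f : {poly R}).
Hypothesis f_split : f = a *: \prod_(e <- [:: e1; e2; e3]) ('X - e%:P).

Lemma split_cubicE : f = a *: 'X^3 - (a * (e1 + e2 + e3)) *: 'X^2
  + (a * (e1 * e2 + e1 * e3 + e2 * e3)) *: 'X - (a * e1 * e2 * e3)%:P.
Proof. by rewrite f_split !big_cons big_nil -!mul_polyC !polyCM !polyCD; ring. Qed.

Lemma split_cubic_coef : [/\ f`_3 = a, f`_2 = - (a * (e1 + e2 + e3)),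
  f`_1 = a * (e1 * e2 + e1 * e3 + e2 * e3) & f`_0 = - (a * e1 * e2 * e3)].
Proof.
rewrite split_cubicE; split;
  by rewrite !(coefD, coefB, coefN, coefZ, coefXn, coefX, coefC) /=; ring.
Qed.

Lemma wdisc_split_cubic :
  wdisc f = 16 * a ^+ 6 * ((e1 - e2) * (e1 - e3) * (e2 - e3)) ^+ 2.
Proof.
have [f3 f2 f1 f0] := split_cubic_coef.
by rewrite /wdisc /wb2 /wb4 /wb6 /wb8 /wa2 /wa4 /wa6 f3 f2 f1 f0; ring.
Qed.

Lemma uniq_split_cubic : wdisc f != 0 -> uniq [:: e1; e2; e3].
Proof.
rewrite wdisc_split_cubic !mulf_eq0 !subr_eq0 /= !inE.
by case: (e1 == e2); case: (e1 == e3); case: (e2 == e3); rewrite ?orbT ?orbF.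
Qed.

Lemma horner_deriv_split_cubic x :
  f^`().[x] = a * (3 * x ^+ 2 - 2 * (e1 + e2 + e3) * x + (e1 * e2 + e1 * e3 + e2 * e3)).
Proof.
rewrite split_cubicE !(derivD, derivB, derivN, derivZ, derivXn, derivX, derivC) !hornerE /=.
by ring.
Qed.

Lemma wc6_split_cubic : (e1 - e2) * (e1 - e3) * (e2 - e3) * wc6 f =
  -32 * ((f^`().[e1] - f^`().[e2]) * (f^`().[e1] - f^`().[e3])
         * (f^`().[e2] - f^`().[e3])).
Proof.
have [f3 f2 f1 f0] := split_cubic_coef.
by rewrite !horner_deriv_split_cubic /wc6 /wb2 /wb4 /wb6 /wa2 /wa4 /wa6 f3 f2 f1 f0; ring.
Qed.

End SplitCubic.

Lemma split_cubic_small_point (L : fieldType) (a gamma e1 e2 e3 : L) (A f F G : {poly L}) :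
    a != 0 -> uniq [:: e1; e2; e3] -> f = a *: \prod_(e <- [:: e1; e2; e3]) ('X - e%:P) ->
    gamma != 0 -> A^`() = gamma%:P -> A * G ^+ 2 = f \Po F -> F^`() != 0 ->
    (2 * (size G).-1 <= (size F).-1 - 1)%N ->
  G ^+ 2 %= F^`() /\ wc6 f = 0.
Proof.
move=> a_neq0 uniq_e f_split gamma_neq0 dA AG2_f dF_neq0 small_G.
have G_neq0 := (split_integral_point_neq0 a_neq0 f_split AG2_f dF_neq0).2.
pose P e := gamma *: G ^+ 2 == f^`().[e] *: F^`().
have eqp_of x : P x -> G ^+ 2 %= F^`().
  move=> /eqP Px; apply/eqpP; exists (gamma, f^`().[x]); rewrite //= gamma_neq0 /=.
  apply: contraTneq isT => dx_eq0; move: Px; rewrite dx_eq0 scale0r => /eqP.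
  by rewrite scaler_eq0 expf_eq0 (negbTE gamma_neq0) (negbTE G_neq0).
have eq_deriv x y : P x -> P y -> f^`().[x] = f^`().[y].
  move=> /eqP Px /eqP Py; apply/eqP; rewrite -subr_eq0.
  have : (f^`().[x] - f^`().[y]) *: F^`() == 0 by rewrite scalerBl -Px -Py subrr.
  by rewrite scaler_eq0 (negbTE dF_neq0) orbF.
have c6_eq0 : (f^`().[e1] - f^`().[e2]) * (f^`().[e1] - f^`().[e3])
              * (f^`().[e2] - f^`().[e3]) = 0 -> wc6 f = 0.
  move=> diff_eq0; apply/eqP; have := wc6_split_cubic f_split; rewrite diff_eq0 mulr0 => /eqP.
  move: uniq_e; rewrite /= !inE !negb_or !mulf_eq0 !subr_eq0.
  by case/and3P=> /andP[/negbTE-> /negbTE->] /negbTE->.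
have [] : [\/ P e1 /\ P e2, P e1 /\ P e3 | P e2 /\ P e3].
  have := count_deriv_mismatch_le1 a_neq0 uniq_e f_split dA AG2_f dF_neq0 small_G.
  by rewrite /= -/(P e1) -/(P e2) -/(P e3); case: (P e1) (P e2) (P e3) => [] [] []; constructor.
all: move=> [Px Py]; split; first exact: eqp_of Px.
all: by apply: c6_eq0; rewrite (eq_deriv _ _ Px Py) subrr !(mul0r, mulr0).
Qed.

Lemma integral_point_small_G (k : finFieldType) (A f F G : {poly k}) (gamma : k) :
    gamma != 0 -> A^`() = gamma%:P -> is_elliptic_cubic f -> A * G ^+ 2 = f \Po F ->
    F^`() != 0 -> (2 * (size G).-1 <= (size F).-1 - 1)%N ->
  G ^+ 2 %= F^`() /\ wc6 f = 0.
Proof.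
move=> gamma_neq0 dA [size_f disc_neq0] AG2_f dF_neq0 small_G.
have f_neq0 : f != 0 by rewrite -size_poly_gt0 size_f.
have [L [rs fL_split _]] := FinSplittingFieldFor f_neq0.
have := eqp_size fL_split; rewrite size_prod_XsubC size_map_poly size_f.
case: rs fL_split => [|e1 [|e2 [|e3 [|? ?]]]] // /eqp_polyCP[a [a_neq0 f_split]] _.
rewrite mul_polyC in f_split.
have uniq_e : uniq [:: e1; e2; e3].
  by apply: (uniq_split_cubic f_split); rewrite wdisc_map fmorph_eq0.
have [] := split_cubic_small_point a_neq0 uniq_e f_split (G := map_poly (in_alg L) G)
  (A := map_poly (in_alg L) A) (F := map_poly (in_alg L) F) (gamma := in_alg L gamma).
- by rewrite fmorph_eq0.
- by rewrite deriv_map dA map_polyC.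
- by rewrite -map_comp_poly -AG2_f rmorphM rmorphXn.
- by rewrite deriv_map map_poly_eq0.
- by rewrite !size_map_poly.
rewrite -rmorphXn deriv_map eqp_map wc6_map => eqp_G2_dF /eqP.
by rewrite fmorph_eq0 => /eqP.
Qed.

Unset Implicit Arguments.

Theorem theorem3p4 (k : finFieldType) (A f F G : {poly k}) (gamma : k) :
  ~~ (2%N \in [pchar k]) ->
  squarefree_poly A ->
  odd (size A).-1 -> (1 < (size A).-1)%N ->
  gamma != 0 -> A^`() = gamma%:P ->
  is_elliptic_cubic f ->
  A * G ^+ 2 = f \Po F ->
  F^`() != 0 ->
  let d := (size A).-1 in
  let condA := (2 * (size F).-1 <= d - 1)%N in
  let condB := (2 * (size G).-1 <= (size F).-1 - 1)%N in
  let condC := exists beta : k, beta != 0 /\ G ^+ 2 = beta%:P * F^`() in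
  (condA <-> condB) /\ (condB <-> condC) /\
  ((condA \/ condB \/ condC) -> j_inv f = 1728).
Proof.
move=> _ _ _ _ gamma_neq0 dA f_cubic AG2_f dF_neq0 d condA condB condC.
have F_size_gt1 := size_gt1_deriv_neq0 dF_neq0.
have deg_AG : ((size A).-1 + 2 * (size G).-1 = 3 * (size F).-1)%N.
  by rewrite (size_integral_point AG2_f) ?f_cubic.1 // -size_poly_gt0 f_cubic.1.
have AB : condA <-> condB by rewrite /condA /condB /d; split; lia.
have CB : condC -> condB.
  move=> /eqp_polyCP/eqp_size size_G2; rewrite /condB.
  have := lt_size_deriv (p := F); have := size_exp G 2; rewrite size_G2 -size_poly_gt0.
  by move: F_size_gt1; move: (size F) (size F^`()) (size G) => sF sdF sG; lia.
have BCj : condB -> condC /\ j_inv f = 1728.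
  case/(integral_point_small_G gamma_neq0 dA f_cubic AG2_f dF_neq0) => /eqp_polyCP C c6_eq0.
  by split; last exact: j_inv_1728 f_cubic.2 c6_eq0.
split; first exact: AB.
split; first by split=> [/BCj[] | /CB].
by case=> [/AB | [|/CB]] /BCj[].
Qed.
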